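(* Let $F$ be a field and let $R$ be an $F$-algebra which satisfies (NK). Then there exists an $F$-subalgebra $A$ of $R$ which satisfies (NK) and such that $\dim_F(A)\le\omega$ (i.e. $A$ has countable dimension over $F$).
   Context: All rings are associative with unit. A right ideal is nil if all its elements are nilpotent. A ring satisfies the condition (NK) if it contains two nil right ideals whose sum is not nil. *)

From HB Require Import structures.
From mathcomp Require Import all_boot all_order all_algebra.
Set Implicit Arguments. Unset Strict Implicit. Unset Printing Implicit Defensive.
Import GRing.Theory.
Local Open Scope ring_scope.

Definition nilpotent_elt (R : pzRingType) (x : R) : Prop := exists n : nat, x ^+ n = 0.

Definition right_ideal_in (R : pzRingType) (S I : R -> Prop) : Prop :=
  (forall x, I x -> S x) /\ I 0 /\
  (forall x y, I x -> I y -> I (x - y)) /\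
  (forall x r, I x -> S r -> I (x * r)).

Definition nil_set (R : pzRingType) (I : R -> Prop) : Prop :=
  forall x, I x -> nilpotent_elt x.

Definition set_sum (R : pzRingType) (I J : R -> Prop) : R -> Prop :=
  fun z => exists x y, I x /\ J y /\ z = x + y.

Definition NK_in (R : pzRingType) (S : R -> Prop) : Prop :=
  exists I J : R -> Prop, right_ideal_in S I /\ right_ideal_in S J /\
    nil_set I /\ nil_set J /\ ~ nil_set (set_sum I J).

Definition NK (R : pzRingType) : Prop := NK_in (fun _ : R => True).

Definition subalgebra (F : fieldType) (R : algType F) (A : R -> Prop) : Prop :=
  A 0 /\ A 1 /\ (forall x y, A x -> A y -> A (x + y)) /\
  (forall x y, A x -> A y -> A (x * y)) /\
  (forall (c : F) x, A x -> A (c *: x)).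

(* A has dimension at most omega over F: it is the F-span of a countable family. *)
Definition countable_dim (F : fieldType) (R : algType F) (A : R -> Prop) : Prop :=
  exists b : nat -> R, forall x,
    A x <-> exists (n : nat) (c : nat -> F), x = \sum_(i < n) c i *: b i.

From mathcomp Require Import all_boot all_order all_algebra.
From Stdlib Require Import Classical_Prop.
Set Implicit Arguments. Unset Strict Implicit. Unset Printing Implicit Defensive.
Import GRing.Theory.
Local Open Scope ring_scope.

(* If (NK) holds, pick x in I and y in J with x + y not nilpotent.  The
   subalgebra generated by x and y is spanned by the countably many words in
   x and y, and the traces of I and J on it are nil right ideals of it whose
   sum still contains x + y. *)

Definition span (F : fieldType) (V : lmodType F) (b : nat -> V) (z : V) : Prop :=
  exists (n : nat) (c : nat -> F), z = \sum_(i < n) c i *: b i.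

Section Span.
Variables (F : fieldType) (V : lmodType F) (b : nat -> V).

Lemma sum_scale_widen (c : nat -> F) n N : (n <= N)%N ->
  \sum_(i < n) c i *: b i = \sum_(i < N) (if (i < n)%N then c i else 0) *: b i.
Proof.
move=> leNn; rewrite (big_ord_widen N (fun i => c i *: b i) leNn) big_mkcond /=.
by apply: eq_bigr => i _; case: ifP => //; rewrite scale0r.
Qed.

Lemma span0 : span b 0.
Proof. by exists 0%N, (fun _ => 0); rewrite big_ord0. Qed.

Lemma spanD x y : span b x -> span b y -> span b (x + y).
Proof.
move=> [n [c ->]] [m [d ->]].
exists (maxn n m), (fun i => (if (i < n)%N then c i else 0)
                            + (if (i < m)%N then d i else 0)).
rewrite (sum_scale_widen c (leq_maxl n m)) (sum_scale_widen d (leq_maxr n m)).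
by rewrite -big_split /=; apply: eq_bigr => i _; rewrite scalerDl.
Qed.

Lemma spanZ k x : span b x -> span b (k *: x).
Proof.
move=> [n [c ->]]; exists n, (fun i => k * c i).
by rewrite scaler_sumr; apply: eq_bigr => i _; rewrite scalerA.
Qed.

Lemma span_gen k : span b (b k).
Proof.
exists k.+1, (fun i => if i == k then 1 else 0).
rewrite big_ord_recr /= eqxx scale1r big1 ?add0r // => i _.
by rewrite (ltn_eqF (ltn_ord i)) scale0r.
Qed.

Lemma span_sum n (f : 'I_n -> V) : (forall i, span b (f i)) ->
  span b (\sum_(i < n) f i).
Proof.
elim: n f => [|n IHn] f spanf; first by rewrite big_ord0; exact: span0.
by rewrite big_ord_recr; apply: spanD => //; apply: IHn.
Qed.

End Span.

Section SpanAlgebra.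
Variables (F : fieldType) (R : algType F) (b : nat -> R).
Hypothesis span_genM : forall i j, span b (b i * b j).

Lemma spanM x y : span b x -> span b y -> span b (x * y).
Proof.
move=> [n [c ->]] [m [d ->]].
rewrite mulr_suml; apply: span_sum => i.
rewrite mulr_sumr; apply: span_sum => j.
by rewrite -scalerAl -scalerAr; do 2 apply: spanZ.
Qed.

Lemma span_subalgebra : span b 1 -> subalgebra (span b).
Proof.
move=> span1; split; first exact: span0.
by do !split=> //; [exact: spanD | exact: spanM | exact: spanZ].
Qed.

End SpanAlgebra.

Section Words.
Variables (F : fieldType) (R : algType F) (x y : R).

Definition word (w : seq bool) : R := \prod_(i <- w) (if i then x else y).

(* Naturals that do not code a [seq bool] are sent to 0. *)
Definition word_enum (n : nat) : R := oapp word 0 (unpickle n).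

Lemma word_enum_pickle w : word_enum (pickle w) = word w.
Proof. by rewrite /word_enum pickleK. Qed.

Lemma span_word w : span word_enum (word w).
Proof. by rewrite -word_enum_pickle; apply: span_gen. Qed.

Lemma span_word_enumM i j : span word_enum (word_enum i * word_enum j).
Proof.
rewrite [word_enum i]/word_enum [word_enum j]/word_enum.
case: (unpickle i) (unpickle j) => [u|] [v|] /=;
  rewrite ?mul0r ?mulr0; try exact: span0.
by rewrite -big_cat; apply: span_word.
Qed.

Lemma span_words_subalgebra : subalgebra (span word_enum).
Proof.
apply: (span_subalgebra span_word_enumM).
have -> : 1 = word [::] by rewrite /word big_nil.
exact: span_word.
Qed.

Lemma span_words_l : span word_enum x.
Proof.
have -> : x = word [:: true] by rewrite /word big_seq1.
exact: span_word.
Qed.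

Lemma span_words_r : span word_enum y.
Proof.
have -> : y = word [:: false] by rewrite /word big_seq1.
exact: span_word.
Qed.

End Words.

Lemma right_ideal_trace (F : fieldType) (R : algType F) (A K : R -> Prop) :
  subalgebra A -> right_ideal_in (fun _ => True) K ->
  right_ideal_in A (fun u => K u /\ A u).
Proof.
move=> [A0 [_ [AD [AM AZ]]]] [_ [K0 [KB KM]]].
have AB u v : A u -> A v -> A (u - v).
  by move=> Au Av; apply: AD => //; rewrite -scaleN1r; apply: AZ.
split; first by move=> u [].
split; first by [].
split; first by move=> u v [Ku Au] [Kv Av]; split; [apply: KB | apply: AB].
by move=> u r [Ku Au] Ar; split; [apply: KM | apply: AM].
Qed.

Lemma NK_witness (R : pzRingType) : NK R ->
  exists I J : R -> Prop, exists x y,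
    [/\ right_ideal_in (fun _ => True) I, right_ideal_in (fun _ => True) J,
        nil_set I, nil_set J & [/\ I x, J y & ~ nilpotent_elt (x + y)]].
Proof.
move=> [I [J [idI [idJ [nilI [nilJ not_nilIJ]]]]]].
apply: NNPP => no_witness; apply: not_nilIJ => _ [x [y [Ix [Jy ->]]]].
by apply: NNPP => not_nil; apply: no_witness; exists I, J, x, y.
Qed.

Lemma NK_in_subalgebra (F : fieldType) (R : algType F) (A I J : R -> Prop) x y :
  subalgebra A -> A x -> A y ->
  right_ideal_in (fun _ => True) I -> right_ideal_in (fun _ => True) J ->
  nil_set I -> nil_set J -> I x -> J y -> ~ nilpotent_elt (x + y) ->
  NK_in A.
Proof.
move=> subA Ax Ay idI idJ nilI nilJ Ix Jy not_nil.
exists (fun u => I u /\ A u), (fun u => J u /\ A u).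
split; first exact: right_ideal_trace.
split; first exact: right_ideal_trace.
split; first by move=> u [Iu _]; apply: nilI.
split; first by move=> u [Ju _]; apply: nilJ.
by move=> nilIJ; apply/not_nil/nilIJ; exists x, y.
Qed.

Theorem mainTheorem3 (F : fieldType) (R : algType F) :
  NK R ->
  exists A : R -> Prop, subalgebra A /\ NK_in A /\ countable_dim A.
Proof.
move=> /NK_witness [I [J [x [y [idI idJ nilI nilJ [Ix Jy not_nil]]]]]].
exists (span (word_enum x y)); split; first exact: span_words_subalgebra.
split; last by exists (word_enum x y).
exact: (NK_in_subalgebra (span_words_subalgebra x y) (span_words_l x y)
          (span_words_r x y) idI idJ nilI nilJ Ix Jy not_nil).
Qed.
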